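(* Let $\Pi$ be a finite simply laced diagram with labelling $\sigma:I\to V$, $I=\{1,\dots,|V|\}$, and let $\mathcal A=\{G_{ij},\phi^i_{ij}\mid i\ne j\in I\}$ be a continuous $\mathrm{SO}(2)$-amalgam with respect to $\Pi$ and $\sigma$. Then $\mathcal A$ is isomorphic (as an $\mathrm{SO}(2)$-amalgam) to the standard $\mathrm{SO}(2)$-amalgam $\mathcal A(\Pi,\sigma,\mathrm{SO}(2))$.
   Context: A simply laced diagram is a finite graph $\Pi$ with vertex set $V$ (all edges simple); a labelling is a bijection $\sigma:I\to V$. $\varepsilon_{12},\varepsilon_{23}:\mathrm{SO}(2)\to\mathrm{SO}(3)$ embed a $2\times2$ rotation matrix as the upper-left, resp. lower-right, $2\times 2$ diagonal block; $\iota_1(x)=(x,1)$, $\iota_2(x)=(1,x)$ into $\mathrm{SO}(2)\times\mathrm{SO}(2)$. An $\mathrm{SO}(2)$-amalgam with respect to $\Pi$ and $\sigma$ is a family of groups $G_{ij}$ ($i\ne j\in I$, $G_{ij}=G_{ji}$) with monomorphisms $\phi^i_{ij}:\mathrm{SO}(2)\to G_{ij}$ such that $G_{ij}=\mathrm{SO}(3)$ if $\{i^\sigma,j^\sigma\}$ is an edge and $G_{ij}=\mathrm{SO}(2)\times\mathrm{SO}(2)$ otherwise, and for $i<j$ the images satisfy $\phi^i_{ij}(\mathrm{SO}(2))=\varepsilon_{12}(\mathrm{SO}(2))$, $\phi^j_{ij}(\mathrm{SO}(2))=\varepsilon_{23}(\mathrm{SO}(2))$ in the edge case and $\phi^i_{ij}(\mathrm{SO}(2))=\iota_1(\mathrm{SO}(2))$,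 $\phi^j_{ij}(\mathrm{SO}(2))=\iota_2(\mathrm{SO}(2))$ otherwise. It is continuous if all $\phi^i_{ij}$ are continuous (Lie group topologies). The standard one $\mathcal A(\Pi,\sigma,\mathrm{SO}(2))$ has, for $i<j$, $\phi^i_{ij}=\varepsilon_{12},\phi^j_{ij}=\varepsilon_{23}$ (edge) resp. $\phi^i_{ij}=\iota_1,\phi^j_{ij}=\iota_2$ (non-edge). An isomorphism of $\mathrm{SO}(2)$-amalgams $\{G_{ij},\phi^i_{ij}\}\to\{H_{ij},\psi^i_{ij}\}$ is a permutation $\pi$ of $I$ together with group isomorphisms $\alpha_{ij}:G_{ij}\to H_{\pi(i)\pi(j)}$ such that $\alpha_{ij}\circ\phi^i_{ij}=\psi^{\pi(i)}_{\pi(i)\pi(j)}$ for all $i\ne j$. *)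

From Stdlib Require Import Reals.
Open Scope R_scope.

Record M2 := mkM2 { a11 : R; a12 : R; a21 : R; a22 : R }.
Record M3 := mkM3 { b11 : R; b12 : R; b13 : R; b21 : R; b22 : R; b23 : R;
                    b31 : R; b32 : R; b33 : R }.

Definition ent2 (A : M2) (i j : nat) : R :=
  match i, j with
  | 0, 0 => a11 A | 0, 1 => a12 A | 1, 0 => a21 A | 1, 1 => a22 A | _, _ => 0
  end.
Definition of2 (f : nat -> nat -> R) : M2 := mkM2 (f 0%nat 0%nat) (f 0%nat 1%nat) (f 1%nat 0%nat) (f 1%nat 1%nat).

Definition ent3 (A : M3) (i j : nat) : R :=
  match i, j with
  | 0, 0 => b11 A | 0, 1 => b12 A | 0, 2 => b13 A
  | 1, 0 => b21 A | 1, 1 => b22 A | 1, 2 => b23 A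
  | 2, 0 => b31 A | 2, 1 => b32 A | 2, 2 => b33 A
  | _, _ => 0
  end.
Definition of3 (f : nat -> nat -> R) : M3 :=
  (mkM3 (f 0 0) (f 0 1) (f 0 2) (f 1 0) (f 1 1) (f 1 2) (f 2 0) (f 2 1) (f 2 2))%nat.

Definition kron (i j : nat) : R := if Nat.eqb i j then 1 else 0.

Definition mul2 (A B : M2) : M2 :=
  of2 (fun i j => ent2 A i 0%nat * ent2 B 0%nat j + ent2 A i 1%nat * ent2 B 1%nat j).
Definition tr2 (A : M2) : M2 := of2 (fun i j => ent2 A j i).
Definition id2 : M2 := of2 kron.
Definition det2 (A : M2) : R := a11 A * a22 A - a12 A * a21 A.

Definition mul3 (A B : M3) : M3 :=
  of3 (fun i j => ent3 A i 0%nat * ent3 B 0%nat j + ent3 A i 1%nat * ent3 B 1%nat j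
                  + ent3 A i 2%nat * ent3 B 2%nat j).
Definition tr3 (A : M3) : M3 := of3 (fun i j => ent3 A j i).
Definition id3 : M3 := of3 kron.
Definition det3 (A : M3) : R :=
  b11 A * (b22 A * b33 A - b23 A * b32 A)
  - b12 A * (b21 A * b33 A - b23 A * b31 A)
  + b13 A * (b21 A * b32 A - b22 A * b31 A).

Definition SO2 (A : M2) : Prop := mul2 (tr2 A) A = id2 /\ det2 A = 1.
Definition SO3 (A : M3) : Prop := mul3 (tr3 A) A = id3 /\ det3 A = 1.

Definition eps12 (A : M2) : M3 :=
  of3 (fun i j => if (Nat.ltb i 2%nat && Nat.ltb j 2%nat)%bool then ent2 A i j
                  else kron i j).
Definition eps23 (A : M2) : M3 :=
  of3 (fun i j => if (Nat.leb 1%nat i && Nat.leb 1%nat j)%bool then ent2 A (i - 1)%nat (j - 1)%nat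
                  else kron i j).

(** * Ambient carrier for the rank-2 groups G_ij:
    [inl] for SO(3), [inr] for SO(2) x SO(2). Each G_ij is a subset [Gset b],
    with [b = true] iff the corresponding vertices are joined by an edge. *)
Definition Gcar : Type := (M3 + (M2 * M2))%type.

Definition Gset (b : bool) (g : Gcar) : Prop :=
  match g with
  | inl m => b = true /\ SO3 m
  | inr p => b = false /\ SO2 (fst p) /\ SO2 (snd p)
  end.

Definition Gmul (g h : Gcar) : Gcar :=
  match g, h with
  | inl a, inl c => inl (mul3 a c)
  | inr (a1, a2), inr (c1, c2) => inr (mul2 a1 c1, mul2 a2 c2)
  | _, _ => inl id3 (* never used: mixed products do not occur inside a G_ij *)
  end.

Definition iota1 (A : M2) : Gcar := inr (A, id2).
Definition iota2 (A : M2) : Gcar := inr (id2, A).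

Definition std_first (b : bool) (A : M2) : Gcar :=
  if b then inl (eps12 A) else iota1 A.
Definition std_second (b : bool) (A : M2) : Gcar :=
  if b then inl (eps23 A) else iota2 A.

Definition close2 (A B : M2) (d : R) : Prop :=
  forall i j, (i < 2)%nat -> (j < 2)%nat -> Rabs (ent2 A i j - ent2 B i j) < d.
Definition close3 (A B : M3) (d : R) : Prop :=
  forall i j, (i < 3)%nat -> (j < 3)%nat -> Rabs (ent3 A i j - ent3 B i j) < d.
Definition Gclose (g h : Gcar) (d : R) : Prop :=
  match g, h with
  | inl a, inl c => close3 a c d
  | inr (a1, a2), inr (c1, c2) => close2 a1 c1 d /\ close2 a2 c2 d
  | _, _ => False
  end.

Definition cont_on_SO2 (phi : M2 -> Gcar) : Prop :=
  forall x, SO2 x -> forall e, 0 < e -> exists d, 0 < d /\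
    forall y, SO2 y -> close2 x y d -> Gclose (phi x) (phi y) e.

Definition mono_SO2 (b : bool) (phi : M2 -> Gcar) : Prop :=
  (forall x, SO2 x -> Gset b (phi x)) /\
  (forall x y, SO2 x -> SO2 y -> phi (mul2 x y) = Gmul (phi x) (phi y)) /\
  (forall x y, SO2 x -> SO2 y -> phi x = phi y -> x = y).

Definition same_image (f g : M2 -> Gcar) : Prop :=
  forall h, (exists x, SO2 x /\ f x = h) <-> (exists x, SO2 x /\ g x = h).

(** The index set I = {1,...,|V|} is represented as {0,...,n-1} (order preserved).
    A simply laced diagram: a type V with a symmetric irreflexive boolean edge
    relation; the labelling sigma : I -> V is a bijection (so V is finite, |V| = n). *)
Definition simple_graph {V : Type} (edge : V -> V -> bool) : Prop :=
  (forall u v, edge u v = edge v u) /\ (forall v, edge v v = false).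

Definition labelling {V : Type} (n : nat) (sigma : nat -> V) : Prop :=
  (forall i j, (i < n)%nat -> (j < n)%nat -> sigma i = sigma j -> i = j) /\
  (forall v, exists i, (i < n)%nat /\ sigma i = v).

Definition adj {V : Type} (edge : V -> V -> bool) (sigma : nat -> V) (i j : nat) : bool :=
  edge (sigma i) (sigma j).

(** An SO(2)-amalgam: [phi i j] is phi^i_{ij} : SO(2) -> G_ij (for i <> j),
    where G_ij = G_ji is SO(3) if {sigma i, sigma j} is an edge and SO(2)xSO(2)
    otherwise; phi^j_{ij} is [phi j i]. *)
Definition SO2_amalgam {V : Type} (edge : V -> V -> bool) (n : nat) (sigma : nat -> V)
    (phi : nat -> nat -> M2 -> Gcar) : Prop :=
  forall i j, (i < n)%nat -> (j < n)%nat -> i <> j ->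
    mono_SO2 (adj edge sigma i j) (phi i j) /\
    ((i < j)%nat ->
       same_image (phi i j) (std_first (adj edge sigma i j)) /\
       same_image (phi j i) (std_second (adj edge sigma i j))).

Definition continuous_SO2_amalgam {V : Type} (edge : V -> V -> bool) (n : nat)
    (sigma : nat -> V) (phi : nat -> nat -> M2 -> Gcar) : Prop :=
  SO2_amalgam edge n sigma phi /\
  (forall i j, (i < n)%nat -> (j < n)%nat -> i <> j -> cont_on_SO2 (phi i j)).

Definition std_amalgam {V : Type} (edge : V -> V -> bool) (sigma : nat -> V)
    (i j : nat) : M2 -> Gcar :=
  if Nat.ltb i j then std_first (adj edge sigma i j)
  else std_second (adj edge sigma i j).

Definition group_iso (b c : bool) (alpha : Gcar -> Gcar) : Prop :=
  (forall g, Gset b g -> Gset c (alpha g)) /\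
  (forall g h, Gset b g -> Gset b h -> alpha (Gmul g h) = Gmul (alpha g) (alpha h)) /\
  (forall g h, Gset b g -> Gset b h -> alpha g = alpha h -> g = h) /\
  (forall k, Gset c k -> exists g, Gset b g /\ alpha g = k).

(** Isomorphism of SO(2)-amalgams (both over the same diagram and labelling):
    a permutation pi of I and isomorphisms alpha_ij : G_ij -> H_{pi i, pi j}
    (alpha_ij = alpha_ji since G_ij = G_ji) with
    alpha_ij o phi^i_ij = psi^{pi i}_{pi i, pi j}. *)
Definition amalgam_iso {V : Type} (edge : V -> V -> bool) (n : nat) (sigma : nat -> V)
    (phi psi : nat -> nat -> M2 -> Gcar) : Prop :=
  exists (pi : nat -> nat) (alpha : nat -> nat -> Gcar -> Gcar),
    (forall i, (i < n)%nat -> (pi i < n)%nat) /\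
    (forall i j, (i < n)%nat -> (j < n)%nat -> pi i = pi j -> i = j) /\
    (forall i j, (i < n)%nat -> (j < n)%nat -> i <> j ->
       alpha i j = alpha j i /\
       group_iso (adj edge sigma i j) (adj edge sigma (pi i) (pi j)) (alpha i j) /\
       (forall x, SO2 x -> alpha i j (phi i j x) = psi (pi i) (pi j) x)).

(* A continuous injective endomorphism f of SO(2) is read off near the identity, through
   [asin], as a locally additive and bounded angle function; Cauchy's argument makes it
   linear, so f (rot t) = rot (c t), and rot (2 PI) = id together with injectivity forces
   c = 1 or c = -1: f is the identity or the transpose.  Hence each embedding phi^i_ij of a
   continuous SO(2)-amalgam is the standard one up to a transpose, and conjugating G_ij by
   diag(u, 1, w) with signs u, w (componentwise on SO(2) x SO(2)) undoes both twists at
   once, giving an isomorphism with the identity permutation. *)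

From Stdlib Require Import Reals Lra Lia Psatz ZArith.
Open Scope R_scope.

(** * Rotations and sign conjugation in SO(2) *)

Definition is_sign (u : R) : Prop := u = 1 \/ u = -1.

Lemma SO2_iff a b c d : SO2 (mkM2 a b c d) <-> b = - c /\ d = a /\ a * a + c * c = 1.
Proof.
  unfold SO2, id2, mul2, tr2, of2, kron, det2; simpl. split.
  - intros [Horth Hdet]. injection Horth; intros.
    assert (Hsq : (b + c) * (b + c) + (d - a) * (d - a) = 0) by nra.
    assert (E1 : (b + c) * (b + c) = 0) by nra. assert (E2 : (d - a) * (d - a) = 0) by nra.
    apply Rmult_integral in E1, E2. lra.
  - intros (-> & -> & H). split; [f_equal; nra | nra].
Qed.

Lemma SO2_id2 : SO2 id2.
Proof. change id2 with (mkM2 1 0 0 1). apply SO2_iff. lra. Qed.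

Definition rot (t : R) : M2 := mkM2 (cos t) (- sin t) (sin t) (cos t).

Lemma SO2_rot t : SO2 (rot t).
Proof. apply SO2_iff. pose proof (sin2_cos2 t). unfold Rsqr in *. lra. Qed.

Lemma mul2_rot a b : mul2 (rot a) (rot b) = rot (a + b).
Proof. unfold rot, mul2, of2; simpl. rewrite cos_plus, sin_plus. f_equal; ring. Qed.

Lemma rot_0 : rot 0 = id2.
Proof. unfold rot. rewrite cos_0, sin_0. unfold id2, of2, kron; simpl. f_equal; lra. Qed.

Lemma mul2_id2 : mul2 id2 id2 = id2.
Proof. rewrite <- rot_0, mul2_rot, Rplus_0_r. reflexivity. Qed.

Lemma rot_2PI : rot (2 * PI) = id2.
Proof. unfold rot. rewrite cos_2PI, sin_2PI. unfold id2, of2, kron; simpl. f_equal; lra. Qed.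

Lemma rot_PI_neq_id2 : rot PI <> id2.
Proof. unfold rot, id2, of2, kron; simpl. rewrite cos_PI. intros H; injection H; intros; lra. Qed.

Lemma SO2_is_rot x : SO2 x -> exists t, x = rot t.
Proof.
  destruct x as [a b c d]. intros H. apply SO2_iff in H. destruct H as (-> & -> & H).
  assert (Hsqrt : sqrt (1 - a²) = Rabs c).
  { rewrite <- sqrt_Rsqr_abs. f_equal. unfold Rsqr. lra. }
  destruct (Rle_dec 0 c).
  - exists (acos a). unfold rot. rewrite cos_acos, sin_acos, Hsqrt, Rabs_pos_eq by nra.
    reflexivity.
  - exists (- acos a). unfold rot.
    rewrite cos_neg, sin_neg, cos_acos, sin_acos, Hsqrt, Rabs_left by nra.
    f_equal; ring.
Qed.

Lemma rot_inj_small a b : Rabs a < PI / 2 -> Rabs b < PI / 2 -> rot a = rot b -> a = b.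
Proof.
  intros Ha Hb H. injection H; intros.
  apply Rabs_def2 in Ha, Hb.
  rewrite <- (asin_sin a), <- (asin_sin b) by lra. congruence.
Qed.

Lemma rot_eq_id2 a : rot a = id2 -> exists k : Z, a = 2 * IZR k * PI.
Proof.
  unfold rot, id2, of2, kron; simpl. intros H. injection H; intros _ _ _ Hcos.
  replace a with (2 * (a / 2)) in Hcos by field. rewrite cos_2a_sin in Hcos.
  assert (Hsin : sin (a / 2) = 0) by nra.
  destruct (sin_eq_0_0 _ Hsin) as [k Hk]. exists k. lra.
Qed.

Lemma Rabs_sin_le t : Rabs (sin t) <= Rabs t.
Proof.
  assert (Hpos : forall t, 0 <= t -> Rabs (sin t) <= t).
  { intros x Hx. destruct (Req_dec x 0) as [->|Hx0]; [rewrite sin_0, Rabs_R0; lra|].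
    pose proof (sin_lt_x x ltac:(lra)). pose proof (SIN_bound x).
    destruct (Rle_dec x PI).
    - rewrite Rabs_pos_eq by (apply sin_ge_0; lra). lra.
    - pose proof PI2_1. apply Rabs_le; lra. }
  destruct (Rle_dec 0 t).
  - rewrite (Rabs_pos_eq t) by lra. auto.
  - rewrite <- (Ropp_involutive t), sin_neg, Rabs_Ropp, Rabs_Ropp, (Rabs_pos_eq (- t)) by lra.
    apply Hpos. lra.
Qed.

Lemma Rabs_cos_sub1_le t : Rabs (cos t - 1) <= Rabs t.
Proof.
  replace t with (2 * (t / 2)) at 1 by field. rewrite cos_2a_sin.
  pose proof (Rabs_sin_le (t / 2)). pose proof (SIN_bound (t / 2)).
  replace (1 - 2 * sin (t / 2) * sin (t / 2) - 1) with (- (2 * (sin (t / 2) * sin (t / 2))))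
    by ring.
  rewrite Rabs_Ropp, !Rabs_mult, (Rabs_pos_eq 2) by lra.
  replace (Rabs (t / 2)) with (Rabs t / 2) in *
    by (unfold Rdiv; rewrite Rabs_mult, Rabs_inv, (Rabs_pos_eq 2) by lra; reflexivity).
  assert (Rabs (sin (t / 2)) <= 1) by (apply Rabs_le; lra).
  pose proof (Rabs_pos (sin (t / 2))). nra.
Qed.

Lemma close2_id2_rot t e : Rabs t < e -> close2 id2 (rot t) e.
Proof.
  intros Ht i j Hi Hj. pose proof (Rabs_sin_le t). pose proof (Rabs_cos_sub1_le t).
  destruct i as [|[|i]], j as [|[|j]]; try lia; unfold id2, rot, of2, kron; simpl;
    rewrite Rabs_minus_sym, ?Rminus_0_r, ?Rabs_Ropp; lra.
Qed.

Lemma SO2_near_id2 y : SO2 y -> Rabs (a11 y - 1) < 1 / 2 -> Rabs (a21 y) < 1 / 2 ->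
  y = rot (asin (a21 y)) /\ Rabs (asin (a21 y)) < PI / 6.
Proof.
  destruct y as [a b c d]; simpl. intros Hy Ha Hc. apply SO2_iff in Hy.
  destruct Hy as (-> & -> & Hy). apply Rabs_def2 in Ha, Hc.
  pose proof PI_RGT_0. pose proof (asin_bound c).
  assert (Hs : sin (asin c) = c) by (apply sin_asin; lra).
  split.
  - unfold rot. rewrite Hs, cos_asin by lra.
    replace (sqrt (1 - c²)) with a; [reflexivity|].
    rewrite <- (sqrt_Rsqr a) by lra. f_equal. unfold Rsqr. lra.
  - apply Rabs_def1.
    + apply sin_increasing_0; try lra. rewrite Hs, sin_PI6. lra.
    + apply sin_increasing_0; try lra. rewrite Hs, sin_neg, sin_PI6. lra.
Qed.

(* For [u = -1] this is conjugation by diag(-1, 1), equivalently by diag(1, -1). *)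
Definition sconj2 (u : R) (x : M2) : M2 := mkM2 (a11 x) (u * a12 x) (u * a21 x) (a22 x).

Lemma sconj2_rot c t : is_sign c -> sconj2 c (rot t) = rot (c * t).
Proof.
  unfold sconj2, rot; simpl. intros [-> | ->].
  - replace (1 * t) with t by ring. f_equal; ring.
  - replace (-1 * t) with (- t) by ring. rewrite cos_neg, sin_neg. f_equal; ring.
Qed.

Lemma sconj2_id2 u : sconj2 u id2 = id2.
Proof. unfold sconj2, id2, of2, kron; simpl. f_equal; ring. Qed.

Lemma sconj2K u x : is_sign u -> sconj2 u (sconj2 u x) = x.
Proof. destruct x; unfold sconj2; simpl. intros [-> | ->]; f_equal; ring. Qed.

Lemma sconj2_mul u x y : is_sign u -> sconj2 u (mul2 x y) = mul2 (sconj2 u x) (sconj2 u y).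
Proof. destruct x, y; unfold sconj2, mul2, of2; simpl. intros [-> | ->]; f_equal; ring. Qed.

Lemma SO2_sconj2 u x : is_sign u -> SO2 x -> SO2 (sconj2 u x).
Proof.
  intros Hu Hx. destruct (SO2_is_rot x Hx) as [t ->]. rewrite sconj2_rot by auto. apply SO2_rot.
Qed.

(** * Cauchy's functional equation *)

Lemma exists_nat_gt (r : R) : exists N : nat, r < INR N.
Proof.
  destruct (archimed r) as [Hup _].
  destruct (Z_lt_le_dec (up r) 0) as [Hneg|Hnneg].
  - exists 0%nat. apply IZR_lt in Hneg. simpl. lra.
  - exists (Z.to_nat (up r)). rewrite INR_IZR_INZ, Z2Nat.id by lia. lra.
Qed.

Section Additive.
Variable P : R -> R.
Hypothesis P_add : forall a b, P (a + b) = P a + P b.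

Lemma additive_0 : P 0 = 0.
Proof. pose proof (P_add 0 0) as H. rewrite Rplus_0_r in H. lra. Qed.

Lemma additive_opp x : P (- x) = - P x.
Proof. pose proof (P_add x (- x)) as H. rewrite Rplus_opp_r, additive_0 in H. lra. Qed.

Lemma additive_natmul (m : nat) x : P (INR m * x) = INR m * P x.
Proof.
  induction m as [|m IH].
  - simpl. rewrite Rmult_0_l, additive_0. ring.
  - rewrite S_INR, Rmult_plus_distr_r, P_add, IH, Rmult_1_l. ring.
Qed.

Lemma additive_Zmul (z : Z) x : P (IZR z * x) = IZR z * P x.
Proof.
  destruct (Z_le_gt_dec 0 z).
  - rewrite <- (Z2Nat.id z), <- INR_IZR_INZ by lia. apply additive_natmul.
  - replace z with (- Z.of_nat (Z.to_nat (- z)))%Z by lia.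
    rewrite opp_IZR, <- INR_IZR_INZ, Ropp_mult_distr_l_reverse, additive_opp, additive_natmul.
    ring.
Qed.

Lemma additive_bounded_0 C : (forall t, Rabs (P t) <= C) -> forall t, P t = 0.
Proof.
  intros HC t. destruct (Req_dec (P t) 0) as [|Hne]; [assumption | exfalso].
  assert (Hpos : 0 < Rabs (P t)) by (apply Rabs_pos_lt; exact Hne).
  destruct (exists_nat_gt (C / Rabs (P t))) as [N HN].
  specialize (HC (INR N * t)).
  rewrite additive_natmul, Rabs_mult, (Rabs_pos_eq (INR N)) in HC by apply pos_INR.
  apply (Rmult_lt_compat_r (Rabs (P t))) in HN; [|exact Hpos].
  unfold Rdiv in HN. rewrite Rmult_assoc, Rinv_l, Rmult_1_r in HN; lra.
Qed.

End Additive.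

(* Subtracting the linear part leaves an additive function vanishing on the integers, hence
   1-periodic; it is bounded on [0,1) by scaling into [(-d, d)], so bounded everywhere. *)
Lemma additive_bounded_linear (P : R -> R) d B :
  (forall a b, P (a + b) = P a + P b) -> 0 < d ->
  (forall t, Rabs t < d -> Rabs (P t) <= B) ->
  forall t, P t = P 1 * t.
Proof.
  intros P_add Hd Hb.
  set (g := fun t => P t - P 1 * t).
  assert (g_add : forall a b, g (a + b) = g a + g b) by (intros; unfold g; rewrite P_add; ring).
  assert (g_Z : forall z : Z, g (IZR z) = 0).
  { intros z. rewrite <- (Rmult_1_r (IZR z)), additive_Zmul by exact g_add.
    unfold g. ring. }
  destruct (exists_nat_gt (1 / d)) as [M HM].
  assert (HMpos : 0 < INR M) by (assert (0 < 1 / d) by (apply Rdiv_lt_0_compat; lra); lra).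
  set (C := INR M * (B + Rabs (P 1) * d)).
  assert (g_unit : forall r, 0 <= r < 1 -> Rabs (g r) <= C).
  { intros r Hr.
    assert (Hsmall : Rabs (r / INR M) < d).
    { unfold Rdiv. rewrite Rabs_mult, Rabs_inv, (Rabs_pos_eq r), (Rabs_pos_eq (INR M)) by lra.
      apply Rmult_lt_reg_r with (INR M); [lra|]. rewrite Rmult_assoc, Rinv_l, Rmult_1_r by lra.
      assert (d * (1 / d) = 1) by (field; lra). nra. }
    replace r with (INR M * (r / INR M)) by (field; lra).
    rewrite additive_natmul, Rabs_mult, Rabs_pos_eq by (exact g_add || lra).
    apply Rmult_le_compat_l; [lra|]. unfold g.
    eapply Rle_trans; [apply Rabs_triang|]. rewrite Rabs_Ropp, Rabs_mult.
    apply Rplus_le_compat; [apply Hb; exact Hsmall|].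
    apply Rmult_le_compat_l; [apply Rabs_pos | lra]. }
  assert (g_bounded : forall t, Rabs (g t) <= C).
  { intros t. destruct (base_Int_part t) as [Hlo Hhi].
    replace t with ((t - IZR (Int_part t)) + IZR (Int_part t)) by ring.
    rewrite g_add, g_Z, Rplus_0_r. apply g_unit. lra. }
  intros t. pose proof (additive_bounded_0 g g_add C g_bounded t). unfold g in *. lra.
Qed.

Definition scale_index (d t : R) : nat := S (Z.to_nat (up (Rabs t / d))).

Lemma Rabs_div_scale_index d t M :
  0 < d -> (scale_index d t <= M)%nat -> Rabs (t / INR M) < d.
Proof.
  intros Hd HM. unfold scale_index in HM.
  destruct (archimed (Rabs t / d)) as [Hup _].
  assert (Hz : IZR (up (Rabs t / d)) <= INR (Z.to_nat (up (Rabs t / d)))).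
  { destruct (Z_le_gt_dec 0 (up (Rabs t / d))).
    - rewrite INR_IZR_INZ, Z2Nat.id by lia. lra.
    - apply Rle_trans with 0; [apply IZR_le; lia | apply pos_INR]. }
  apply le_INR in HM. rewrite S_INR in HM.
  assert (HMpos : 0 < INR M) by (pose proof (pos_INR (Z.to_nat (up (Rabs t / d)))); lra).
  unfold Rdiv. rewrite Rabs_mult, Rabs_inv, (Rabs_pos_eq (INR M)) by lra.
  apply Rmult_lt_reg_r with (INR M); [lra|].
  rewrite Rmult_assoc, Rinv_l, Rmult_1_r by lra.
  apply Rmult_lt_reg_r with (/ d); [apply Rinv_0_lt_compat; lra|].
  replace (d * INR M * / d) with (INR M) by (field; lra). fold (Rabs t / d). lra.
Qed.

Section LocallyAdditive.
Variables (psi : R -> R) (d : R).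
Hypothesis d_pos : 0 < d.
Hypothesis psi_add : forall a b, Rabs a < d -> Rabs b < d -> Rabs (a + b) < d ->
  psi (a + b) = psi a + psi b.

Lemma locally_additive_natmul (m : nat) s :
  Rabs (INR m * s) < d -> psi (INR m * s) = INR m * psi s.
Proof.
  induction m as [|m IH]; intros Hms.
  - simpl in *. rewrite Rmult_0_l in *. pose proof (psi_add 0 0 Hms Hms).
    rewrite Rplus_0_r in *. lra.
  - rewrite S_INR, Rmult_plus_distr_r, Rmult_1_l in *.
    pose proof (pos_INR m). pose proof (Rabs_pos s).
    assert (Hsum : Rabs (INR m * s + s) = (INR m + 1) * Rabs s).
    { replace (INR m * s + s) with ((INR m + 1) * s) by ring.
      rewrite Rabs_mult, Rabs_pos_eq by lra. reflexivity. }
    assert (Hm : Rabs (INR m * s) = INR m * Rabs s).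
    { rewrite Rabs_mult, Rabs_pos_eq by lra. reflexivity. }
    rewrite psi_add, IH by nra. ring.
Qed.

Let Phi (t : R) : R := INR (scale_index d t) * psi (t / INR (scale_index d t)).

Let Phi_spec t M : (0 < M)%nat -> Rabs (t / INR M) < d -> Phi t = INR M * psi (t / INR M).
Proof.
  intros HM Ht. unfold Phi. set (N := scale_index d t).
  assert (HN : Rabs (t / INR N) < d) by (apply Rabs_div_scale_index; auto).
  assert (HNpos : 0 < INR N) by (apply lt_0_INR; unfold N, scale_index; lia).
  assert (HMpos : 0 < INR M) by (apply lt_0_INR; lia).
  replace (t / INR N) with (INR M * (t / (INR N * INR M))) in * by (field; lra).
  replace (t / INR M) with (INR N * (t / (INR N * INR M))) in * by (field; lra).
  rewrite !locally_additive_natmul by assumption. ring.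
Qed.

Lemma locally_additive_bounded_linear B :
  (forall t, Rabs t < d -> Rabs (psi t) <= B) ->
  exists c, forall t, Rabs t < d -> psi t = c * t.
Proof.
  intros Hb.
  assert (Phi_psi : forall t, Rabs t < d -> Phi t = psi t).
  { intros t Ht. rewrite (Phi_spec t 1); [simpl; rewrite Rdiv_1_r; ring | lia |].
    simpl. rewrite Rdiv_1_r. exact Ht. }
  assert (Phi_add : forall a b, Phi (a + b) = Phi a + Phi b).
  { intros a b. set (K := (scale_index d a + scale_index d b + scale_index d (a + b))%nat).
    assert (HK : (0 < K)%nat) by (unfold K, scale_index; lia).
    assert (HK_div : forall t, (scale_index d t <= K)%nat -> Rabs (t / INR K) < d)
      by (intros; apply Rabs_div_scale_index; assumption).
    assert (Ha := HK_div a ltac:(unfold K; lia)).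
    assert (Hb' := HK_div b ltac:(unfold K; lia)).
    assert (Hab := HK_div (a + b) ltac:(unfold K; lia)).
    rewrite (Phi_spec a K), (Phi_spec b K), (Phi_spec (a + b) K) by assumption.
    replace ((a + b) / INR K) with (a / INR K + b / INR K) in * by (field; apply not_0_INR; lia).
    rewrite psi_add by assumption. ring. }
  exists (Phi 1). intros t Ht.
  rewrite <- Phi_psi by exact Ht.
  apply (additive_bounded_linear Phi d B Phi_add d_pos).
  intros s Hs. rewrite Phi_psi by exact Hs. auto.
Qed.

End LocallyAdditive.

(** * Continuous monomorphisms of SO(2) *)

Definition SO2_cont_mono (f : M2 -> M2) : Prop :=
  (forall x, SO2 x -> SO2 (f x)) /\
  (forall x y, SO2 x -> SO2 y -> f (mul2 x y) = mul2 (f x) (f y)) /\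
  (forall x y, SO2 x -> SO2 y -> f x = f y -> x = y) /\
  (forall e, 0 < e -> exists d, 0 < d /\
     forall y, SO2 y -> close2 id2 y d -> close2 (f id2) (f y) e).

Lemma SO2_idempotent x : SO2 x -> mul2 x x = x -> x = id2.
Proof.
  intros Hx. destruct (SO2_is_rot x Hx) as [t ->]. rewrite mul2_rot. intros H.
  rewrite <- rot_0. replace t with (- t + (t + t)) at 1 by ring.
  rewrite <- mul2_rot, H, mul2_rot. f_equal; ring.
Qed.

Lemma SO2_hom_rot_extend (f : M2 -> M2) c d :
  (forall x y, SO2 x -> SO2 y -> f (mul2 x y) = mul2 (f x) (f y)) -> 0 < d ->
  (forall t, Rabs t < d -> f (rot t) = rot (c * t)) ->
  forall t, f (rot t) = rot (c * t).
Proof.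
  intros Hmul Hd Hloc.
  assert (Hnat : forall (k : nat) s, Rabs s < d -> f (rot (INR k * s)) = rot (c * (INR k * s))).
  { induction k as [|k IH]; intros s Hs.
    - simpl. rewrite Rmult_0_l. apply Hloc. rewrite Rabs_R0. exact Hd.
    - rewrite S_INR, Rmult_plus_distr_r, Rmult_1_l, <- mul2_rot, Hmul, IH, Hloc, mul2_rot
        by (apply SO2_rot || exact Hs).
      f_equal. ring. }
  intros t. set (k := scale_index d t).
  assert (Hk : 0 < INR k) by (apply lt_0_INR; unfold k, scale_index; lia).
  replace t with (INR k * (t / INR k)) by (field; lra).
  apply Hnat, Rabs_div_scale_index; [exact Hd | lia].
Qed.

(* The scaling factor must be an integer since [rot (2 * PI) = id2], and a unit since
   [f] is injective and [rot (2 * PI / c)] is sent to [id2]. *)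
Lemma rot_scale_sign (f : M2 -> M2) c :
  (forall x y, SO2 x -> SO2 y -> f x = f y -> x = y) ->
  (forall t, f (rot t) = rot (c * t)) -> is_sign c.
Proof.
  intros Hinj Hf. pose proof PI_RGT_0.
  assert (Hf0 : f id2 = id2) by (rewrite <- rot_0, Hf, Rmult_0_r; reflexivity).
  assert (Hker : forall t, rot (c * t) = id2 -> rot t = id2).
  { intros t Ht. apply Hinj; [apply SO2_rot | apply SO2_id2 |]. rewrite Hf0, Hf. exact Ht. }
  destruct (rot_eq_id2 (c * (2 * PI))) as [k Hk]; [rewrite <- Hf, rot_2PI; exact Hf0|].
  assert (Hck : c = IZR k) by (apply Rmult_eq_reg_r with (2 * PI); lra).
  assert (Hc0 : c <> 0).
  { intros Hc. apply rot_PI_neq_id2, Hker. rewrite Hc, Rmult_0_l. apply rot_0. }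
  destruct (rot_eq_id2 (2 * PI / c)) as [k' Hk'].
  { apply Hker. replace (c * (2 * PI / c)) with (2 * PI) by (field; exact Hc0). apply rot_2PI. }
  assert (Hkk' : (k * k')%Z = 1%Z).
  { apply eq_IZR. rewrite mult_IZR, <- Hck.
    apply Rmult_eq_reg_r with (2 * PI); [|lra].
    replace (c * IZR k' * (2 * PI)) with (c * (2 * IZR k' * PI)) by ring.
    rewrite <- Hk'. field. exact Hc0. }
  apply Z.eq_mul_1 in Hkk'. unfold is_sign. rewrite Hck.
  destruct Hkk' as [-> | ->]; [left | right]; reflexivity.
Qed.

Lemma SO2_cont_mono_sign f : SO2_cont_mono f ->
  exists u, is_sign u /\ forall x, SO2 x -> f x = sconj2 u x.
Proof.
  intros (Hso & Hmul & Hinj & Hcont). pose proof PI_RGT_0.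
  assert (Hid : f id2 = id2).
  { apply SO2_idempotent; [apply Hso, SO2_id2|].
    rewrite <- Hmul, mul2_id2 by apply SO2_id2. reflexivity. }
  destruct (Hcont (1 / 2)) as [d [Hd Hnear]]; [lra|].
  set (psi := fun t => asin (a21 (f (rot t)))).
  assert (Hloc : forall t, Rabs t < d -> f (rot t) = rot (psi t) /\ Rabs (psi t) < PI / 6).
  { intros t Ht. pose proof (Hnear _ (SO2_rot t) (close2_id2_rot t d Ht)) as Hc.
    rewrite Hid in Hc. unfold id2, of2, kron in Hc.
    apply SO2_near_id2; [apply Hso, SO2_rot | |].
    - specialize (Hc 0%nat 0%nat ltac:(lia) ltac:(lia)). simpl in Hc.
      rewrite Rabs_minus_sym in Hc. exact Hc.
    - specialize (Hc 1%nat 0%nat ltac:(lia) ltac:(lia)). simpl in Hc.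
      rewrite Rabs_minus_sym, Rminus_0_r in Hc. exact Hc. }
  assert (Hadd : forall a b, Rabs a < d -> Rabs b < d -> Rabs (a + b) < d ->
                   psi (a + b) = psi a + psi b).
  { intros a b Ha Hb Hab.
    destruct (Hloc a Ha) as [Ea Ba], (Hloc b Hb) as [Eb Bb], (Hloc (a + b) Hab) as [Eab Bab].
    apply rot_inj_small; [lra | eapply Rle_lt_trans; [apply Rabs_triang | lra] |].
    rewrite <- Eab, <- mul2_rot, Hmul, Ea, Eb, mul2_rot by apply SO2_rot. reflexivity. }
  destruct (locally_additive_bounded_linear psi d Hd Hadd (PI / 6)) as [c Hc].
  { intros t Ht. left. apply Hloc, Ht. }
  assert (Hrot : forall t, f (rot t) = rot (c * t)).
  { apply (SO2_hom_rot_extend f c d Hmul Hd).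
    intros t Ht. rewrite <- Hc by exact Ht. apply Hloc, Ht. }
  assert (Hsign : is_sign c) by exact (rot_scale_sign f c Hinj Hrot).
  exists c. split; [exact Hsign|].
  intros x Hx. destruct (SO2_is_rot x Hx) as [t ->]. rewrite Hrot, sconj2_rot by exact Hsign.
  reflexivity.
Qed.

(** * Standardizing an SO(2)-amalgam *)

Definition first_block (g : Gcar) : M2 :=
  match g with inl m => mkM2 (b11 m) (b12 m) (b21 m) (b22 m) | inr (p, _) => p end.
Definition second_block (g : Gcar) : M2 :=
  match g with inl m => mkM2 (b22 m) (b23 m) (b32 m) (b33 m) | inr (_, q) => q end.

Lemma first_block_std_first b x : first_block (std_first b x) = x.
Proof. destruct b, x; reflexivity. Qed.
Lemma second_block_std_second b x : second_block (std_second b x) = x.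
Proof. destruct b, x; reflexivity. Qed.

Lemma Gmul_std_first b x y : Gmul (std_first b x) (std_first b y) = std_first b (mul2 x y).
Proof.
  destruct b; simpl.
  - destruct x, y. unfold eps12, mul3, mul2, of3, of2, kron; simpl. do 2 f_equal; ring.
  - unfold iota1. rewrite mul2_id2. reflexivity.
Qed.
Lemma Gmul_std_second b x y : Gmul (std_second b x) (std_second b y) = std_second b (mul2 x y).
Proof.
  destruct b; simpl.
  - destruct x, y. unfold eps23, mul3, mul2, of3, of2, kron; simpl. do 2 f_equal; ring.
  - unfold iota2. rewrite mul2_id2. reflexivity.
Qed.

Lemma Gclose_std_first b x y e : Gclose (std_first b x) (std_first b y) e -> close2 x y e.
Proof.
  destruct b; simpl; [|tauto].
  intros H i j Hi Hj. specialize (H i j ltac:(lia) ltac:(lia)).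
  destruct i as [|[|i]], j as [|[|j]]; try lia; exact H.
Qed.
Lemma Gclose_std_second b x y e : Gclose (std_second b x) (std_second b y) e -> close2 x y e.
Proof.
  destruct b; simpl; [|tauto].
  intros H i j Hi Hj. specialize (H (S i) (S j) ltac:(lia) ltac:(lia)).
  destruct i as [|[|i]], j as [|[|j]]; try lia; exact H.
Qed.

(* [p] is [std] precomposed with the continuous monomorphism [blk o p] of SO(2). *)
Lemma cont_mono_same_image_sign b (std : M2 -> Gcar) (blk : Gcar -> M2) (p : M2 -> Gcar) :
  (forall x, blk (std x) = x) ->
  (forall x y, Gmul (std x) (std y) = std (mul2 x y)) ->
  (forall x y e, Gclose (std x) (std y) e -> close2 x y e) ->
  mono_SO2 b p -> same_image p std -> cont_on_SO2 p ->
  exists u, is_sign u /\ forall x, SO2 x -> p x = std (sconj2 u x).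
Proof.
  intros Hblk Hmul Hcl (_ & Hpmul & Hpinj) Him Hpcont.
  assert (Hp : forall x, SO2 x -> p x = std (blk (p x)) /\ SO2 (blk (p x))).
  { intros x Hx. destruct (proj1 (Him (p x)) (ex_intro _ x (conj Hx eq_refl))) as [y [Hy <-]].
    rewrite Hblk. auto. }
  assert (Hf : SO2_cont_mono (fun x => blk (p x))).
  { split; [|split; [|split]].
    - intros x Hx. apply Hp, Hx.
    - intros x y Hx Hy. rewrite Hpmul, (proj1 (Hp x Hx)), (proj1 (Hp y Hy)), Hmul, !Hblk
        by assumption. reflexivity.
    - intros x y Hx Hy E. apply Hpinj; [exact Hx | exact Hy |].
      rewrite (proj1 (Hp x Hx)), (proj1 (Hp y Hy)), E. reflexivity.
    - intros e He. destruct (Hpcont id2 SO2_id2 e He) as [d [Hd Hc]].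
      exists d. split; [exact Hd|]. intros y Hy Hy1. apply Hcl.
      rewrite <- (proj1 (Hp _ SO2_id2)), <- (proj1 (Hp _ Hy)). auto. }
  destruct (SO2_cont_mono_sign _ Hf) as [u [Hu Hfu]].
  exists u. split; [exact Hu|]. intros x Hx. rewrite (proj1 (Hp x Hx)), Hfu by exact Hx.
  reflexivity.
Qed.

(* For signs [u], [w] this is conjugation by diag(u, 1, w). *)
Definition sconj3 (u w : R) (m : M3) : M3 :=
  mkM3 (b11 m) (u * b12 m) (u * w * b13 m)
       (u * b21 m) (b22 m) (w * b23 m)
       (u * w * b31 m) (w * b32 m) (b33 m).

Lemma sconj3K u w m : is_sign u -> is_sign w -> sconj3 u w (sconj3 u w m) = m.
Proof. destruct m; unfold sconj3; simpl. intros [-> | ->] [-> | ->]; f_equal; ring. Qed.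

Lemma sconj3_mul u w m n : is_sign u -> is_sign w ->
  sconj3 u w (mul3 m n) = mul3 (sconj3 u w m) (sconj3 u w n).
Proof.
  destruct m, n; unfold sconj3, mul3, of3; simpl. intros [-> | ->] [-> | ->]; f_equal; ring.
Qed.

Lemma SO3_sconj3 u w m : is_sign u -> is_sign w -> SO3 m -> SO3 (sconj3 u w m).
Proof.
  destruct m; unfold SO3, sconj3, id3, mul3, tr3, of3, kron, det3; simpl.
  intros Hu Hw [Horth Hdet]. injection Horth; intros.
  destruct Hu as [-> | ->], Hw as [-> | ->]; split; try (f_equal; lra); lra.
Qed.

Lemma sconj3_eps12 u w x : sconj3 u w (eps12 x) = eps12 (sconj2 u x).
Proof. destruct x; unfold sconj3, sconj2, eps12, of3, kron; simpl. f_equal; ring. Qed.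

Lemma sconj3_eps23 u w x : sconj3 u w (eps23 x) = eps23 (sconj2 w x).
Proof. destruct x; unfold sconj3, sconj2, eps23, of3, kron; simpl. f_equal; ring. Qed.

Definition sign_iso (u w : R) (g : Gcar) : Gcar :=
  match g with
  | inl m => inl (sconj3 u w m)
  | inr (p, q) => inr (sconj2 u p, sconj2 w q)
  end.

Lemma sign_isoK u w g : is_sign u -> is_sign w -> sign_iso u w (sign_iso u w g) = g.
Proof. intros Hu Hw. destruct g as [m | [p q]]; simpl; rewrite ?sconj3K, ?sconj2K; auto. Qed.

Lemma Gset_sign_iso b u w g : is_sign u -> is_sign w -> Gset b g -> Gset b (sign_iso u w g).
Proof.
  intros Hu Hw. destruct g as [m | [p q]]; simpl.
  - intros [Hb Hm]. split; [exact Hb | apply SO3_sconj3; assumption].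
  - intros (Hb & Hp & Hq). split; [exact Hb | split; apply SO2_sconj2; assumption].
Qed.

Lemma sign_iso_group_iso b u w : is_sign u -> is_sign w -> group_iso b b (sign_iso u w).
Proof.
  intros Hu Hw. split; [|split; [|split]].
  - intros g. apply Gset_sign_iso; assumption.
  - intros [m | [p q]] [n | [p' q']] Hg Hh; simpl in Hg, Hh;
      try (destruct Hg as [Hg _], Hh as [Hh _]; congruence); simpl.
    + rewrite sconj3_mul by assumption. reflexivity.
    + rewrite !sconj2_mul by assumption. reflexivity.
  - intros g h _ _ E. rewrite <- (sign_isoK u w g), E, sign_isoK; auto.
  - intros k Hk. exists (sign_iso u w k).
    split; [apply Gset_sign_iso; assumption | apply sign_isoK; assumption].
Qed.

Lemma sign_iso_std_first b u w x : sign_iso u w (std_first b x) = std_first b (sconj2 u x).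
Proof.
  destruct b; simpl; [rewrite sconj3_eps12 | unfold iota1; rewrite sconj2_id2]; reflexivity.
Qed.

Lemma sign_iso_std_second b u w x : sign_iso u w (std_second b x) = std_second b (sconj2 w x).
Proof.
  destruct b; simpl; [rewrite sconj3_eps23 | unfold iota2; rewrite sconj2_id2]; reflexivity.
Qed.

Definition quarter_turn : M2 := mkM2 0 (-1) 1 0.

Lemma SO2_quarter_turn : SO2 quarter_turn.
Proof. apply SO2_iff. lra. Qed.

(* The sign [u] with [p = std o sconj2 u] is recovered from the image of a quarter turn. *)
Definition first_sign (p : M2 -> Gcar) : R := a21 (first_block (p quarter_turn)).
Definition second_sign (p : M2 -> Gcar) : R := a21 (second_block (p quarter_turn)).

Lemma first_sign_eq b p u :
  (forall x, SO2 x -> p x = std_first b (sconj2 u x)) -> first_sign p = u.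
Proof.
  intros Hp. unfold first_sign. rewrite Hp, first_block_std_first by exact SO2_quarter_turn.
  simpl. ring.
Qed.

Lemma second_sign_eq b p u :
  (forall x, SO2 x -> p x = std_second b (sconj2 u x)) -> second_sign p = u.
Proof.
  intros Hp. unfold second_sign. rewrite Hp, second_block_std_second by exact SO2_quarter_turn.
  simpl. ring.
Qed.

Definition standardizing_iso (p1 p2 : M2 -> Gcar) : Gcar -> Gcar :=
  sign_iso (first_sign p1) (second_sign p2).

Lemma standardizing_iso_spec b p1 p2 :
  mono_SO2 b p1 -> mono_SO2 b p2 ->
  same_image p1 (std_first b) -> same_image p2 (std_second b) ->
  cont_on_SO2 p1 -> cont_on_SO2 p2 ->
  group_iso b b (standardizing_iso p1 p2) /\
  (forall x, SO2 x -> standardizing_iso p1 p2 (p1 x) = std_first b x) /\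
  (forall x, SO2 x -> standardizing_iso p1 p2 (p2 x) = std_second b x).
Proof.
  intros Hm1 Hm2 Him1 Him2 Hc1 Hc2.
  destruct (cont_mono_same_image_sign b _ _ p1 (first_block_std_first b) (Gmul_std_first b)
              (Gclose_std_first b) Hm1 Him1 Hc1) as [u [Hu Hp1]].
  destruct (cont_mono_same_image_sign b _ _ p2 (second_block_std_second b) (Gmul_std_second b)
              (Gclose_std_second b) Hm2 Him2 Hc2) as [w [Hw Hp2]].
  unfold standardizing_iso. rewrite (first_sign_eq b p1 u Hp1), (second_sign_eq b p2 w Hp2).
  split; [|split]; intros.
  - apply sign_iso_group_iso; assumption.
  - rewrite Hp1, sign_iso_std_first, sconj2K by assumption. reflexivity.
  - rewrite Hp2, sign_iso_std_second, sconj2K by assumption. reflexivity.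
Qed.

Lemma continuous_amalgam_standardize {V : Type} (edge : V -> V -> bool) n sigma phi i j :
  simple_graph edge -> continuous_SO2_amalgam edge n sigma phi ->
  (i < n)%nat -> (j < n)%nat -> (i < j)%nat ->
  group_iso (adj edge sigma i j) (adj edge sigma i j) (standardizing_iso (phi i j) (phi j i)) /\
  (forall x, SO2 x ->
     standardizing_iso (phi i j) (phi j i) (phi i j x) = std_first (adj edge sigma i j) x) /\
  (forall x, SO2 x ->
     standardizing_iso (phi i j) (phi j i) (phi j i x) = std_second (adj edge sigma i j) x).
Proof.
  intros [Hsym _] [Ham Hcont] Hi Hj Hij.
  destruct (Ham i j Hi Hj ltac:(lia)) as [Hm1 [Him1 Him2]]; [exact Hij|].
  destruct (Ham j i Hj Hi ltac:(lia)) as [Hm2 _].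
  unfold adj in Hm2 at 1. rewrite Hsym in Hm2.
  apply standardizing_iso_spec; try assumption; apply Hcont; auto; lia.
Qed.

(* The permutation of the index set is the identity, so the labelling plays no role. *)
Theorem mainTheorem4 (V : Type) (edge : V -> V -> bool) (n : nat) (sigma : nat -> V)
    (phi : nat -> nat -> M2 -> Gcar) :
  simple_graph edge ->
  labelling n sigma ->
  continuous_SO2_amalgam edge n sigma phi ->
  amalgam_iso edge n sigma phi (std_amalgam edge sigma).
Proof.
  intros Hgraph _ Hamal.
  exists (fun i => i),
    (fun i j => standardizing_iso (phi (Nat.min i j) (Nat.max i j))
                                  (phi (Nat.max i j) (Nat.min i j))).
  split; [auto | split; [auto |]].
  intros i j Hi Hj Hij. split; [rewrite Nat.min_comm, Nat.max_comm; reflexivity |].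
  unfold std_amalgam.
  destruct (Nat.lt_gt_cases i j) as [[Hlt | Hgt] _]; [exact Hij | |].
  - rewrite Nat.min_l, Nat.max_r, (proj2 (Nat.ltb_lt i j) Hlt) by lia.
    destruct (continuous_amalgam_standardize edge n sigma phi i j) as (Hiso & Hfirst & _); auto.
  - rewrite Nat.min_r, Nat.max_l, (proj2 (Nat.ltb_ge i j)) by lia.
    destruct (continuous_amalgam_standardize edge n sigma phi j i) as (Hiso & _ & Hsecond); auto.
    replace (adj edge sigma i j) with (adj edge sigma j i) by (unfold adj; apply (proj1 Hgraph)).
    auto.
Qed.
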